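(* Let $f$, $u_0$, $L_f$, $V$, $\pi$, $L_v$, $L_\pi$ be as follows: $f:\mathcal{X}\times\mathcal{U}\to\mathcal{X}$ is Lipschitz with constant $L_f$ (i.e. $\|f(x,u)-f(x',u')\|_\infty\le L_f\|(x-x',u-u')\|_\infty$), $f(0,u_0)=0$, and $V:\mathcal{X}\to\mathbb{R}$, $\pi:\mathcal{X}\to\mathcal{U}$ are Lipschitz (w.r.t. $\|\cdot\|_\infty$) with constants $L_v,L_\pi$. Let $\mathcal{R}\subseteq\mathcal{X}$ be compact, $c_1\ge0$, and $c_2=\max\{L_v,1\}L_f\max\{1,L_\pi+c_1\}$. Let $\eta>0$ with $\mathcal{B}(0,\eta)\subset\mathcal{R}$, and assume $V(x)>0$ for all $x\in\mathcal{R}$ with $\|x\|_\infty\ge\eta$. Then there exists $\bar\epsilon>0$ such that for every $\epsilon\in(0,\bar\epsilon]$ the following holds: if $(V,\pi)$ is $\epsilon$-stable within $\mathcal{R}$, $\mathcal{D}(\mathcal{R},\rho)$ is an $\mathcal{R}$-invariant sublevel set with $\mathcal{B}(0,\epsilon)\subset\mathcal{D}(\mathcal{R},\rho)$, $\|\pi(0)-u_0\|_\infty\le c_1\epsilon$, $c_2\epsilon<\rho$ and $\mathcal{B}(0,c_2\epsilon)\subset\mathcal{R}$, then for every $x_0\in\mathcal{D}(\mathcal{R},\rho)\setminus\mathcal{B}(0,\epsilon)$ the sequence $x_{k+1}=f(x_k,\pi(x_k))$ satisfies $\|x_k\|_\infty\le\eta$ for all $k\ge K$, for some finite $K$.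
   Context: All norms are $\|\cdot\|_\infty$. $\mathcal{B}(0,\epsilon)=\{x:\|x\|_\infty<\epsilon\}$. The pair $(V,\pi)$ is called $\epsilon$-stable within a region $\mathcal{R}$ if: (a) $V(0)=0$; (b) there exists $\zeta>0$ such that $V(f(x,\pi(x)))-V(x)<-\zeta$ for all $x\in\mathcal{R}\setminus\mathcal{B}(0,\epsilon)$; (c) $V(x)>0$ for all $x\in\mathcal{R}\setminus\mathcal{B}(0,\epsilon)$. For $\rho\in\mathbb{R}$, $\mathcal{D}(\mathcal{R},\rho)=\{x\in\mathcal{R}: V(x)\le\rho\}$; it is called an $\mathcal{R}$-invariant sublevel set if $x\in\mathcal{D}(\mathcal{R},\rho)$ implies $f(x,\pi(x))\in\mathcal{R}$. *)

From HB Require Import structures.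
From mathcomp Require Import all_boot all_order all_algebra.
From mathcomp Require Import all_classical all_reals all_analysis.
Set Implicit Arguments. Unset Strict Implicit. Unset Printing Implicit Defensive.
Import Order.TTheory GRing.Theory Num.Theory.
Import numFieldNormedType.Exports.
Local Open Scope classical_set_scope.
Local Open Scope ring_scope.

(* State space X = R^n and input space U = R^m as row vectors 'rV[R]_n;
   the MathComp-Analysis norm `|x| on matrices is the sup norm
   (mx_norm x = max_i |x_i|), i.e. ||.||_infty. *)

(* Lipschitz w.r.t. ||.||_infty on X x U: ||(x-x',u-u')||_infty = max(...) *)
Definition lipschitz2 {R : realType} {n m : nat}
  (f : 'rV[R]_n -> 'rV[R]_m -> 'rV[R]_n) (L : R) :=
  forall x x' u u', `|f x u - f x' u'| <= L * Num.max `|x - x'| `|u - u'|.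

Definition lipschitz1 {R : realType} {n p : nat}
  (g : 'rV[R]_n -> 'rV[R]_p) (L : R) :=
  forall x x', `|g x - g x'| <= L * `|x - x'|.

Definition lipschitzR {R : realType} {n : nat} (V : 'rV[R]_n -> R) (L : R) :=
  forall x x', `|V x - V x'| <= L * `|x - x'|.

Definition eps_stable {R : realType} {n m : nat}
  (f : 'rV[R]_n -> 'rV[R]_m -> 'rV[R]_n) (V : 'rV[R]_n -> R)
  (pi : 'rV[R]_n -> 'rV[R]_m) (Rg : set 'rV[R]_n) (eps : R) :=
  V 0 = 0 /\
  (exists zeta : R, 0 < zeta /\
     forall x, Rg x -> ~ (`|x| < eps) -> V (f x (pi x)) - V x < - zeta) /\
  (forall x, Rg x -> ~ (`|x| < eps) -> 0 < V x).

Definition sublevel {R : realType} {n : nat} (V : 'rV[R]_n -> R)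
  (Rg : set 'rV[R]_n) (rho : R) : set 'rV[R]_n :=
  [set x | Rg x /\ V x <= rho].

Definition invariant_sublevel {R : realType} {n m : nat}
  (f : 'rV[R]_n -> 'rV[R]_m -> 'rV[R]_n) (V : 'rV[R]_n -> R)
  (pi : 'rV[R]_n -> 'rV[R]_m) (Rg : set 'rV[R]_n) (rho : R) :=
  forall x, sublevel V Rg rho x -> Rg (f x (pi x)).

Definition Binf {R : realType} {n : nat} (r : R) : set 'rV[R]_n :=
  [set x | `|x| < r].

(* Since V is Lipschitz, hence continuous, and positive
   on the compact set {x in Rg | eta <= |x|}, it is bounded there below by some
   mV > 0; we take epsbar = min(eta, mV / (|c2| + 1)), which makes c2 eps < mV.
   The proof then has three steps:
   - descent: on the invariant sublevel set D(Rg, rho), V decreases by zeta at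
     every step outside the eps-ball while staying positive, so the trajectory
     enters B(0, eps) after finitely many steps K;
   - trapping: the terminal set B(0, eps) u {x in Rg | V x <= c2 eps} is
     forward invariant, because one step from the eps-ball moves at most
     Lf max(1, Lpi + c1) eps away from 0, costing at most c2 eps in V;
   - localisation: the terminal set lies in the closed eta-ball, since outside
     it V >= mV > c2 eps. *)

From HB Require Import structures.
From mathcomp Require Import all_boot all_order all_algebra.
From mathcomp Require Import all_classical all_reals all_analysis.
From mathcomp Require Import lra.
Set Implicit Arguments. Unset Strict Implicit. Unset Printing Implicit Defensive.
Import Order.TTheory GRing.Theory Num.Theory.
Import numFieldNormedType.Exports.
Local Open Scope classical_set_scope.
Local Open Scope ring_scope.

Lemma lipschitz_continuous (R : realType) (U W : normedModType R)
    (g : U -> W) (L : R) :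
  (forall x x', `|g x - g x'| <= L * `|x - x'|) -> continuous g.
Proof.
move=> gL x; apply/cvgrPdist_lt => e e0.
have d0 : 0 < e / (`|L| + 1) by rewrite divr_gt0 // ltr_wpDl.
near=> y.
have xy : `|x - y| < e / (`|L| + 1).
  by near: y; move/fcvgrPdist_lt: (@cvg_id _ (nbhs x)) => /(_ _ d0).
apply: (le_lt_trans (gL x y)); apply: (le_lt_trans (ler_norm _)).
rewrite normrM normr_id.
apply: (le_lt_trans (ler_wpM2l (normr_ge0 L) (ltW xy))).
by rewrite mulrCA gtr_pMr // ltr_pdivrMr ?ltr_wpDl // mul1r ltrDl.
Unshelve. all: by end_near.
Qed.

Lemma compact_pos_lower_bound (R : realType) (n : nat)
    (g : 'rV[R]_n -> R) (S : set 'rV[R]_n) :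
  compact S -> continuous g -> (forall x, S x -> 0 < g x) ->
  exists2 mg, 0 < mg & forall x, S x -> mg <= g x.
Proof.
move=> cS cg gpos.
have [[y Sy]|S0] := pselect (S !=set0); last first.
  by exists 1 => // x Sx; exfalso; apply: S0; exists x.
have [z /set_mem Sz zmin] :=
  EVT_min_rV (ex_intro _ y Sy) cS (continuous_subspaceT cg).
by exists (g z) => [|x Sx]; [exact: gpos | apply: zmin; rewrite inE].
Qed.

Lemma compact_outside_ball (R : realType) (n : nat) (S : set 'rV[R]_n)
    (r : R) :
  compact S -> compact (S `&` [set x | r <= `|x|]).
Proof.
move=> cS; apply: compact_closedI => //.
apply: (@preimage_closed _ R (@Num.norm _ 'rV[R]_n) [set s | r <= s]).
- by move=> ? _; exact: norm_continuous.
- exact: closed_ge.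
Qed.

Lemma lower_bound_outside_ball (R : realType) (n : nat) (g : 'rV[R]_n -> R)
    (L : R) (S : set 'rV[R]_n) (r : R) :
  lipschitzR g L -> compact S -> (forall x, S x -> r <= `|x| -> 0 < g x) ->
  exists2 mg, 0 < mg & forall x, S x -> r <= `|x| -> mg <= g x.
Proof.
move=> gL cS gpos.
have [mg mg0 glow] := compact_pos_lower_bound (compact_outside_ball (r := r) cS)
  (lipschitz_continuous gL) (fun x '(conj Sx rx) => gpos x Sx rx).
by exists mg => // x Sx rx; apply: glow.
Qed.

(* Any 0 <= eps <= m / (|c| + 1) keeps c eps strictly below m > 0; this
   dictates the choice of the threshold epsbar. *)
Lemma below_margin (R : realFieldType) (c m eps : R) :
  0 < m -> 0 <= eps -> eps <= m / (`|c| + 1) -> c * eps < m.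
Proof.
move=> m0 eps0 eps_m.
apply: (le_lt_trans (ler_wpM2r eps0 (ler_norm c))).
apply: (le_lt_trans (ler_wpM2l (normr_ge0 c) eps_m)).
by rewrite mulrCA gtr_pMr // ltr_pdivrMr ?ltr_wpDl // mul1r ltrDl.
Qed.

(* In positive dimension, a Lipschitz-type bound around 0 forces its constant
   to be nonnegative (test it on the all-ones vector). *)
Lemma lipschitz_const_ge0 (R : realType) (n p : nat)
    (g : 'rV[R]_n.+1 -> 'rV[R]_p) (L : R) :
  (forall x, `|g x - g 0| <= L * `|x|) -> 0 <= L.
Proof.
move=> gL.
have one_gt0 : 0 < `|const_mx 1 : 'rV[R]_n.+1|.
  rewrite normr_gt0; apply/eqP => /matrixP /(_ 0 0).
  by rewrite !mxE; apply/eqP; rewrite oner_eq0.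
by have := le_trans (normr_ge0 _) (gL (const_mx 1)); rewrite pmulr_lge0.
Qed.

Section ClosedLoop.
Variables (R : realType) (n m : nat).
Variables (f : 'rV[R]_n -> 'rV[R]_m -> 'rV[R]_n) (pi : 'rV[R]_n -> 'rV[R]_m).
Variables (V : 'rV[R]_n -> R) (Rg : set 'rV[R]_n).

Let F x := f x (pi x).

(* One closed-loop step from the eps-ball lands in the ball of radius
   Lf max(1, Lpi + c1) eps, since f(0,u0) = 0 and pi(0) is c1 eps-close to u0. *)
Lemma small_ball_step (u0 : 'rV[R]_m) (Lf Lpi c1 eps : R) :
  lipschitz2 f Lf -> f 0 u0 = 0 -> lipschitz1 pi Lpi ->
  0 <= Lf -> 0 <= Lpi -> `|pi 0 - u0| <= c1 * eps ->
  forall x, `|x| < eps -> `|F x| <= Lf * Num.max 1 (Lpi + c1) * eps.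
Proof.
move=> fL f0 piL Lf0 Lpi0 pi0 x xeps.
have eps0 : 0 <= eps := le_trans (normr_ge0 x) (ltW xeps).
have piu0 : `|pi x - u0| <= (Lpi + c1) * eps.
  rewrite -(subrK (pi 0) (pi x)) -addrA mulrDl.
  apply: (le_trans (ler_normD _ _)); apply: lerD => //.
  apply: (le_trans (piL x 0)); rewrite subr0 ler_wpM2l //; exact: ltW.
have := fL x 0 (pi x) u0; rewrite f0 !subr0 => /le_trans; apply.
rewrite -mulrA ler_wpM2l // ge_max; apply/andP; split.
  by apply: (le_trans (ltW xeps)); rewrite ler_peMl // le_max lexx.
by apply: (le_trans piu0); rewrite ler_wpM2r // le_max lexx orbT.
Qed.

Lemma V_le_norm (Lv : R) :
  lipschitzR V Lv -> V 0 = 0 -> forall y, V y <= Num.max Lv 1 * `|y|.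
Proof.
move=> VL V0 y; apply: (le_trans (ler_norm _)).
have := VL y 0; rewrite V0 !subr0 => /le_trans; apply.
by rewrite ler_wpM2r // le_max lexx.
Qed.

Variables (eps rho c : R).

Definition terminal_set : set 'rV[R]_n :=
  Binf eps `|` [set x | Rg x /\ V x <= c * eps].

(* The terminal set is forward invariant: from the eps-ball one step costs at
   most c eps in V, and outside the ball V does not increase on Rg. *)
Lemma terminal_set_invariant :
  (forall x, Rg x -> ~ `|x| < eps -> V (F x) <= V x) ->
  invariant_sublevel f V pi Rg rho -> Binf eps `<=` sublevel V Rg rho ->
  c * eps < rho -> (forall x, `|x| < eps -> V (F x) <= c * eps) ->
  forall x, terminal_set x -> terminal_set (F x).
Proof.
move=> Vdec inv ball_sub c_rho small_step x Tx.
have [xeps|xeps] := pselect (`|x| < eps).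
  have [Fxeps|Fxeps] := pselect (`|F x| < eps); first by left.
  by right; split; [apply/inv/ball_sub | exact: small_step].
case: Tx => [//|[Rx Vx]]; right; split.
  by apply: inv; split => //; exact: le_trans Vx (ltW c_rho).
exact: le_trans (Vdec x Rx xeps) Vx.
Qed.

Lemma terminal_set_in_ball (eta mV : R) :
  eps <= eta -> c * eps < mV ->
  (forall x, Rg x -> eta <= `|x| -> mV <= V x) ->
  forall x, terminal_set x -> `|x| <= eta.
Proof.
move=> eps_eta c_mV Vlow x [xeps|[Rx Vx]]; first exact: le_trans (ltW xeps) _.
rewrite leNgt; apply/negP => /ltW/(Vlow x Rx) mV_V.
by have := le_lt_trans Vx c_mV; rewrite ltNge mV_V.
Qed.

Lemma reaches_small_ball (zeta : R) x0 :
  0 < zeta ->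
  (forall x, Rg x -> ~ `|x| < eps -> V (F x) - V x < - zeta) ->
  (forall x, Rg x -> ~ `|x| < eps -> 0 < V x) ->
  invariant_sublevel f V pi Rg rho -> sublevel V Rg rho x0 ->
  exists K, `|iter K F x0| < eps.
Proof.
move=> zeta0 Vdec Vpos inv [Rx0 Vx0].
apply: contrapT => never_small.
have outside k : ~ `|iter k F x0| < eps by move=> small; apply: never_small; exists k.
have descent k : sublevel V Rg rho (iter k F x0) /\
    V (iter k F x0) <= V x0 - k%:R * zeta.
  elim: k => [|k [[Rk Vk] Vk_bound]] /=; first by rewrite mul0r subr0.
  have := Vdec _ Rk (outside k); rewrite -/F => step.
  split; first by split; [exact: inv | lra].
  by rewrite -natr1 mulrDl mul1r; lra.
have rho_ge0 : 0 <= rho := le_trans (ltW (Vpos _ Rx0 (outside 0%N))) Vx0.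
have rho_zeta : 0 <= rho / zeta by rewrite divr_ge0 // ltW.
have := archi_boundP rho_zeta; rewrite ltr_pdivrMr // => big_k.
set k := Num.Def.archi_bound _ in big_k.
have [[Rk _] Vk] := descent k.
have := Vpos _ Rk (outside k); lra.
Qed.

End ClosedLoop.

Theorem theorem1 (R : realType) (n m : nat)
  (f : 'rV[R]_n -> 'rV[R]_m -> 'rV[R]_n) (u0 : 'rV[R]_m)
  (V : 'rV[R]_n -> R) (pi : 'rV[R]_n -> 'rV[R]_m) (Lf Lv Lpi : R)
  (Rg : set 'rV[R]_n) (c1 eta : R) :
  lipschitz2 f Lf -> f 0 u0 = 0 ->
  lipschitzR V Lv -> lipschitz1 pi Lpi ->
  compact Rg -> 0 <= c1 ->
  0 < eta -> Binf eta `<=` Rg ->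
  (forall x, Rg x -> eta <= `|x| -> 0 < V x) ->
  let c2 := Num.max Lv 1 * Lf * Num.max 1 (Lpi + c1) in
  exists epsbar : R, 0 < epsbar /\
    forall eps : R, 0 < eps -> eps <= epsbar ->
    forall rho : R,
      eps_stable f V pi Rg eps ->
      invariant_sublevel f V pi Rg rho ->
      Binf eps `<=` sublevel V Rg rho ->
      `|pi 0 - u0| <= c1 * eps ->
      c2 * eps < rho ->
      Binf (c2 * eps) `<=` Rg ->
      forall x0, sublevel V Rg rho x0 -> ~ (`|x0| < eps) ->
      exists K : nat, forall k : nat, (K <= k)%N ->
        `|iter k (fun x => f x (pi x)) x0| <= eta.
Proof.
case: n f V pi Rg => [|n] f V pi Rg fL f0 VL piL cRg _ eta0 _ Vpos_eta c2.
  (* In dimension 0 every state is the zero vector. *)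
  by exists 1; split => // *; exists 0%N => k _; rewrite thinmx0 normr0 ltW.
have [mV mV0 Vlow] := lower_bound_outside_ball VL cRg Vpos_eta.
exists (Num.min eta (mV / (`|c2| + 1))).
split; first by rewrite lt_min eta0 divr_gt0 // ltr_wpDl.
move=> eps eps0; rewrite le_min => /andP [eps_eta eps_mV].
move=> rho [V0 [[zeta [zeta0 Vdec]] Vpos]] inv ball_sub pi0 c2_rho _ x0 Dx0 _.
have c2_mV : c2 * eps < mV := below_margin mV0 (ltW eps0) eps_mV.
have Lf0 : 0 <= Lf.
  apply: (@lipschitz_const_ge0 _ _ _ (f^~ 0)) => x.
  by have := fL x 0 0 0; rewrite subr0 subrr normr0 max_l.
have Lpi0 : 0 <= Lpi.
  by apply: (lipschitz_const_ge0 (g := pi)) => x; have := piL x 0; rewrite subr0.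
have small_step x : `|x| < eps -> V (f x (pi x)) <= c2 * eps.
  move=> /(small_ball_step fL f0 piL Lf0 Lpi0 pi0) Fx_small.
  apply: (le_trans (V_le_norm VL V0 _)).
  by rewrite /c2 -!mulrA ler_wpM2l // ?le_max ?ler01 ?orbT // mulrA.
have [K K_small] := reaches_small_ball zeta0 Vdec Vpos inv Dx0.
exists K => k /subnK <-; rewrite iterD.
apply: (terminal_set_in_ball eps_eta c2_mV Vlow).
elim: (k - K)%N => [|j IH]; first by left.
apply: terminal_set_invariant inv ball_sub c2_rho small_step _ IH.
by move=> x Rx /(Vdec x Rx); lra.
Qed.
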